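(* Let $L$ be a finite-dimensional Lie algebra over a field $F$ and let $Q$ be a strong quasi-ideal of $L$. Then either $Q$ is a strong ideal of $L$, or $L$ is almost abelian, or $F$ has characteristic two and there is an isomorphism $L\cong K$ carrying $Q$ onto $Fc$.
   Context: $K$ denotes the three-dimensional Lie algebra with basis $a,b,c$ and products $[a,b]=c$, $[b,c]=b$, $[a,c]=a$. A subalgebra $Q$ is a quasi-ideal of $L$ if $[Q,V]\subseteq Q+V$ for every subspace $V$ of $L$. A subalgebra $U$ of $L$ is a strong ideal (respectively strong quasi-ideal) of $L$ if every one-dimensional subalgebra of $U$ is an ideal (respectively quasi-ideal) of $L$. $L$ is almost abelian if $L=L^2\oplus Fx$ for some $x$, where $L^2=[L,L]$ is abelian and $\mathrm{ad}\,x$ acts as the identity map on $L^2$. *)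

(* Finite-dimensional Lie algebras over a field F are modelled
   as a vectType F (finite dimensional F-vector space) with a bracket. *)
From HB Require Import structures.
From mathcomp Require Import all_boot all_order all_algebra.
Set Implicit Arguments. Unset Strict Implicit. Unset Printing Implicit Defensive.
Import GRing.Theory.
Local Open Scope ring_scope.

Definition is_lie_bracket (F : fieldType) (V : vectType F) (br : V -> V -> V) : Prop :=
  [/\ (forall (k : F) (x y z : V), br (k *: x + y) z = k *: br x z + br y z),
      (forall (k : F) (x y z : V), br x (k *: y + z) = k *: br x y + br x z),
      (forall x : V, br x x = 0)
    & (forall x y z : V, br x (br y z) + br y (br z x) + br z (br x y) = 0)].

Definition lie_brs (F : fieldType) (V : vectType F) (br : V -> V -> V)
    (U W : {vspace V}) : {vspace V} :=
  <<[seq br u w | u <- vbasis U, w <- vbasis W]>>%VS.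

Definition is_subalg (F : fieldType) (V : vectType F) (br : V -> V -> V)
    (U : {vspace V}) : Prop := (lie_brs br U U <= U)%VS.

Definition is_ideal (F : fieldType) (V : vectType F) (br : V -> V -> V)
    (U : {vspace V}) : Prop := (lie_brs br fullv U <= U)%VS.

Definition is_quasi_ideal (F : fieldType) (V : vectType F) (br : V -> V -> V)
    (Q : {vspace V}) : Prop :=
  is_subalg br Q /\ forall W : {vspace V}, (lie_brs br Q W <= Q + W)%VS.

Definition is_strong_ideal (F : fieldType) (V : vectType F) (br : V -> V -> V)
    (U : {vspace V}) : Prop :=
  is_subalg br U /\
  forall W : {vspace V}, (W <= U)%VS -> \dim W = 1%N -> is_subalg br W -> is_ideal br W.

Definition is_strong_quasi_ideal (F : fieldType) (V : vectType F) (br : V -> V -> V)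
    (U : {vspace V}) : Prop :=
  is_subalg br U /\
  forall W : {vspace V}, (W <= U)%VS -> \dim W = 1%N -> is_subalg br W -> is_quasi_ideal br W.

Definition almost_abelian (F : fieldType) (V : vectType F) (br : V -> V -> V) : Prop :=
  let L2 := lie_brs br fullv fullv in
  exists x : V,
    [/\ x != 0, (L2 + <[x]>)%VS = fullv, directv (L2 + <[x]>),
        lie_brs br L2 L2 = 0%VS
      & forall y, y \in L2 -> br x y = y].

(* The algebra K on F^3 with basis a = e0, b = e1, c = e2 and
   [a,b] = c, [b,c] = b, [a,c] = a (extended bilinearly, alternating). *)
Definition Ka (F : fieldType) : 'rV[F]_3 := delta_mx 0 (inord 0).
Definition Kb (F : fieldType) : 'rV[F]_3 := delta_mx 0 (inord 1).
Definition Kc (F : fieldType) : 'rV[F]_3 := delta_mx 0 (inord 2).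

Definition K_br (F : fieldType) (x y : 'rV[F]_3) : 'rV[F]_3 :=
  let x1 := x 0 (inord 0) in let x2 := x 0 (inord 1) in let x3 := x 0 (inord 2) in
  let y1 := y 0 (inord 0) in let y2 := y 0 (inord 1) in let y3 := y 0 (inord 2) in
  (x1 * y2 - x2 * y1) *: Kc F + (x2 * y3 - x3 * y2) *: Kb F
  + (x1 * y3 - x3 * y1) *: Ka F.

(* If Q is not a strong ideal, it contains a line <x> which is a
   quasi-ideal but not an ideal: [x, y] lies in <x> + <y> for every y, but not
   in <x> for some y.  Then ad x acts on L/<x> as a nonzero scalar l, so
   L = E (+) <x> with E the l-eigenspace of ad x, and the Jacobi identity gives
   [h, k] = mu x with 2 mu = 0 for h, k in E.
   - If E is abelian, then L^2 = E and ad (l^-1 x) is the identity on it: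
     L is almost abelian.
   - Otherwise mu != 0, so char F = 2; Jacobi shows E = <h> + <k>, the
     quasi-ideal property of the lines of Q forces Q = <x>, and the basis
     (h / (l mu), k, x / l) has the multiplication table of K. *)
From HB Require Import structures.
From mathcomp Require Import all_boot all_order all_algebra.
From Stdlib Require Import Ring Classical.
Import GRing.Theory.
Local Open Scope ring_scope.
Set Implicit Arguments. Unset Strict Implicit. Unset Printing Implicit Defensive.

(* The square-zero extension F (+) V, with (a, u) (b, v) = (a b, a v + b u),
   is a commutative ring; embedding V and F into it lets the `ring` tactic
   prove identities between linear combinations of vectors. *)
Section SquareZeroExtension.
Variables (F : fieldType) (V : lmodType F).

Definition sqz := (GRing.Field.sort F * GRing.Lmodule.sort V)%type.
Definition sqz_add (p q : sqz) : sqz := (p.1 + q.1, p.2 + q.2).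
Definition sqz_mul (p q : sqz) : sqz := (p.1 * q.1, p.1 *: q.2 + q.1 *: p.2).
Definition sqz_opp (p : sqz) : sqz := (- p.1, - p.2).
Definition sqz_zero : sqz := (0, 0).
Definition sqz_one : sqz := (1, 0).
Definition sqz_vec (v : V) : sqz := (0, v).
Definition sqz_scal (a : F) : sqz := (a, 0).

Lemma sqz_ring_theory :
  ring_theory sqz_zero sqz_one sqz_add sqz_mul
    (fun p q => sqz_add p (sqz_opp q)) sqz_opp eq.
Proof.
constructor.
- by case=> a v; rewrite /sqz_add /= !add0r.
- by case=> a v [b w]; rewrite /sqz_add /= addrC [v + _]addrC.
- by case=> a v [b w] [c z]; rewrite /sqz_add /= !addrA.
- by case=> a v; rewrite /sqz_mul /= mul1r scale1r scaler0 addr0.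
- by case=> a v [b w]; rewrite /sqz_mul /= mulrC addrC.
- case=> a v [b w] [c z]; rewrite /sqz_mul /= mulrA; congr (_, _).
  by rewrite !scalerDr !scalerA addrA [c * a]mulrC [c * b]mulrC.
- case=> a v [b w] [c z]; rewrite /sqz_mul /sqz_add /= mulrDl; congr (_, _).
  by rewrite scalerDl scalerDr addrACA.
- by [].
- by case=> a v; rewrite /sqz_add /sqz_opp /= !subrr.
Qed.

Lemma sqz_vecD u v : sqz_vec (u + v) = sqz_add (sqz_vec u) (sqz_vec v).
Proof. by rewrite /sqz_add /= addr0. Qed.
Lemma sqz_vecN u : sqz_vec (- u) = sqz_opp (sqz_vec u).
Proof. by rewrite /sqz_opp /= oppr0. Qed.
Lemma sqz_vecZ a u : sqz_vec (a *: u) = sqz_mul (sqz_scal a) (sqz_vec u).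
Proof. by rewrite /sqz_mul /= mulr0 scale0r addr0. Qed.
Lemma sqz_vec0 : sqz_vec 0 = sqz_zero. Proof. by []. Qed.
Lemma sqz_scalD a b : sqz_scal (a + b) = sqz_add (sqz_scal a) (sqz_scal b).
Proof. by rewrite /sqz_add /= addr0. Qed.
Lemma sqz_scalN a : sqz_scal (- a) = sqz_opp (sqz_scal a).
Proof. by rewrite /sqz_opp /= oppr0. Qed.
Lemma sqz_scalM a b : sqz_scal (a * b) = sqz_mul (sqz_scal a) (sqz_scal b).
Proof. by rewrite /sqz_mul /= !scaler0 addr0. Qed.
Lemma sqz_scal0 : sqz_scal 0 = sqz_zero. Proof. by []. Qed.
Lemma sqz_scal1 : sqz_scal 1 = sqz_one. Proof. by []. Qed.
Lemma sqz_vec_inj : injective sqz_vec.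
Proof. by move=> u v /(congr1 snd). Qed.
End SquareZeroExtension.

Ltac vector_ring F V :=
  apply: (@sqz_vec_inj F V);
  rewrite ?(@sqz_vecD F V, @sqz_vecN F V, @sqz_vecZ F V, @sqz_vec0 F V,
            @sqz_scalD F V, @sqz_scalN F V, @sqz_scalM F V, @sqz_scal0 F V,
            @sqz_scal1 F V);
  ring.

Lemma mem_add_lineP (F : fieldType) (V : vectType F) (a b v : V) :
  v \in (<[a]> + <[b]>)%VS -> exists p q, v = p *: a + q *: b.
Proof. by case/memv_addP => _ /vlineP [p ->] [_ /vlineP [q ->] ->]; exists p, q. Qed.

Lemma dim1_line (F : fieldType) (V : vectType F) (W : {vspace V}) :
  \dim W = 1%N -> vpick W != 0 /\ W = <[vpick W]>%VS.
Proof.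
move=> W1; have nz : vpick W != 0 by rewrite vpick0 -dimv_eq0 W1.
split => //; apply/eqP; rewrite eq_sym eqEdim -memvE memv_pick.
by rewrite dim_vline nz W1.
Qed.

Section Bracket.
Variables (F : fieldType) (V : vectType F) (br : V -> V -> V).
Hypothesis hL : is_lie_bracket br.

Lemma brDl x y z : br (x + y) z = br x z + br y z.
Proof. by case: hL => H _ _ _; have := H 1 x y z; rewrite !scale1r. Qed.
Lemma brDr x y z : br z (x + y) = br z x + br z y.
Proof. by case: hL => _ H _ _; have := H 1 z x y; rewrite !scale1r. Qed.
Lemma br0l z : br 0 z = 0.
Proof. by apply: (addIr (br 0 z)); rewrite -brDl !add0r. Qed.
Lemma br0r z : br z 0 = 0.
Proof. by apply: (addIr (br z 0)); rewrite -brDr !add0r. Qed.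
Lemma brZl k x z : br (k *: x) z = k *: br x z.
Proof. by case: hL => H _ _ _; have := H k x 0 z; rewrite !addr0 br0l addr0. Qed.
Lemma brZr k x z : br z (k *: x) = k *: br z x.
Proof. by case: hL => _ H _ _; have := H k z x 0; rewrite !addr0 br0r addr0. Qed.
Lemma brxx x : br x x = 0.
Proof. by case: hL. Qed.
Lemma jacobi x y z : br x (br y z) + br y (br z x) + br z (br x y) = 0.
Proof. by case: hL. Qed.

Lemma brC x y : br y x = - br x y.
Proof.
apply/eqP; rewrite -addr_eq0; have := brxx (x + y).
by rewrite brDl !brDr !brxx add0r addr0 addrC => ->.
Qed.

Lemma brNr x z : br z (- x) = - br z x.
Proof. by rewrite -scaleN1r brZr scaleN1r. Qed.

Lemma span_ind (P : V -> Prop) (X : seq V) :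
  P 0 -> (forall u v, P u -> P v -> P (u + v)) ->
  (forall k v, P v -> P (k *: v)) ->
  (forall v, v \in X -> P v) -> forall v, v \in <<X>>%VS -> P v.
Proof.
move=> P0 PD PZ PX v /(@coord_span _ _ _ (in_tuple X)) ->.
by elim/big_ind: _ => // i _; apply/PZ/PX/mem_nth.
Qed.

Lemma lie_brs_ind (P : V -> Prop) (U W : {vspace V}) :
  P 0 -> (forall u v, P u -> P v -> P (u + v)) ->
  (forall k v, P v -> P (k *: v)) ->
  (forall u w, u \in U -> w \in W -> P (br u w)) ->
  forall v, v \in lie_brs br U W -> P v.
Proof.
move=> P0 PD PZ Pb; apply: span_ind => // _ /allpairsP [[u w] [/= Hu Hw ->]].
by apply: Pb; apply: vbasis_mem.
Qed.

Lemma lie_brs_mem (U W : {vspace V}) u w :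
  u \in U -> w \in W -> br u w \in lie_brs br U W.
Proof.
move=> /coord_vbasis -> /coord_vbasis ->.
have brsl (G : 'I_(\dim U) -> V) z : br (\sum_i G i) z = \sum_i br (G i) z.
  by apply: (big_morph (br^~ z)); [exact: (fun x y => brDl x y z) | exact: br0l].
have brsr (G : 'I_(\dim W) -> V) z : br z (\sum_i G i) = \sum_i br z (G i).
  by apply: (big_morph (br z)); [exact: (fun x y => brDr x y z) | exact: br0r].
rewrite brsl; apply: rpred_sum => i _; rewrite brZl brsr; apply: rpredZ.
apply: rpred_sum => j _; rewrite brZr; apply/rpredZ/memv_span.
by apply/allpairsP; exists ((vbasis U)`_i, (vbasis W)`_j); rewrite !mem_nth ?size_tuple.
Qed.

Lemma lie_brs_subP (U W S : {vspace V}) :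
  reflect (forall u w, u \in U -> w \in W -> br u w \in S)
          (lie_brs br U W <= S)%VS.
Proof.
apply: (iffP idP) => [H u w Hu Hw | H]; first exact/(subvP H)/lie_brs_mem.
by apply/subvP; apply: lie_brs_ind => //; [exact: mem0v | exact: memvD | exact: memvZ].
Qed.

Lemma line_subalg x : is_subalg br <[x]>.
Proof.
apply/lie_brs_subP => _ _ /vlineP [a ->] /vlineP [b ->].
by rewrite brZl brZr brxx !scaler0 mem0v.
Qed.

Lemma line_ideal x : (forall y, br x y \in <[x]>%VS) -> is_ideal br <[x]>.
Proof.
move=> Hx; apply/lie_brs_subP => u _ _ /vlineP [b ->].
by rewrite brZr (brC x u) scalerN memvN memvZ.
Qed.

Lemma strong_quasi_line Q e : is_strong_quasi_ideal br Q -> e \in Q -> e != 0 ->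
  forall y, br e y \in (<[e]> + <[y]>)%VS.
Proof.
case=> _ HQ eQ e0 y.
have [_ /(_ <[y]>%VS) /lie_brs_subP] :=
  HQ _ eQ (etrans (dim_vline e) (congr1 nat_of_bool e0)) (line_subalg e).
by apply; apply: memv_line.
Qed.

Lemma not_strong_ideal_witness Q : is_subalg br Q -> ~ is_strong_ideal br Q ->
  exists x, [/\ x \in Q, x != 0 & exists y, br x y \notin <[x]>%VS].
Proof.
move=> HQs nSI; apply: NNPP => Hn; apply: nSI; split => // W WQ W1 _.
have [nz ->] := dim1_line W1; apply: line_ideal => y; apply: NNPP => Hy.
apply: Hn; exists (vpick W); split => //; last by exists y; apply/negP.
exact: (subvP WQ _ (memv_pick W)).
Qed.
End Bracket.

Lemma sum_ord3 (M : zmodType) (G : 'I_3 -> M) :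
  \sum_i G i = G (inord 0) + G (inord 1) + G (inord 2).
Proof.
rewrite !big_ord_recr big_ord0 /= add0r.
by congr (_ + _ + _); congr G; apply: val_inj; rewrite /= inordK.
Qed.

Lemma ord3P (i : 'I_3) : [\/ i = inord 0, i = inord 1 | i = inord 2].
Proof.
case: i => [[|[|[|n]]] Hi] //; [apply: Or31 | apply: Or32 | apply: Or33];
  by apply: val_inj; rewrite /= inordK.
Qed.

Lemma inord3_eq (m n : nat) : (m < 3)%N -> (n < 3)%N ->
  (inord m == inord n :> 'I_3) = (m == n).
Proof. by move=> Hm Hn; rewrite -val_eqE /= !inordK. Qed.

Definition coordrow (F : fieldType) (V : vectType F) n (X : n.-tuple V) (y : V) :
  'rV[F]_n := \row_i coord X i y.

Lemma coordrow_linear (F : fieldType) (V : vectType F) n (X : n.-tuple V) :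
  linear (coordrow X).
Proof. by move=> a u v; apply/rowP => i; rewrite !mxE linearP. Qed.

HB.instance Definition _ (F : fieldType) (V : vectType F) n (X : n.-tuple V) :=
  GRing.isSemilinear.Build F V 'rV[F]_n _ (coordrow X)
    (GRing.semilinear_linear (coordrow_linear X)).

Section KRecognition.
Variables (F : fieldType) (V : vectType F) (br : V -> V -> V).
Hypothesis hL : is_lie_bracket br.
Variables A B C : V.
Hypotheses (tAB : br A B = C) (tAC : br A C = A) (tBC : br B C = B).
Hypotheses (Cnz : C != 0) (spanABC : forall y, y \in <<[:: A; B; C]>>%VS).
Add Ring sqz_ring : (@sqz_ring_theory F V).

(* The bracket in coordinates is the formula defining K_br. *)
Lemma br_coords p0 p1 p2 q0 q1 q2 :
  br (p0 *: A + p1 *: B + p2 *: C) (q0 *: A + q1 *: B + q2 *: C) =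
  (p0 * q2 - p2 * q0) *: A + (p1 * q2 - p2 * q1) *: B + (p0 * q1 - p1 * q0) *: C.
Proof.
rewrite !(brDl hL, brDr hL, brZl hL, brZr hL) !(brxx hL).
rewrite (brC hL A B) (brC hL A C) (brC hL B C) tAB tAC tBC.
vector_ring F V.
Qed.

Definition Kbasis : 3.-tuple V := [tuple A; B; C].
Lemma Kbasis0 : Kbasis`_(@inord 2 0) = A. Proof. by rewrite inordK. Qed.
Lemma Kbasis1 : Kbasis`_(@inord 2 1) = B. Proof. by rewrite inordK. Qed.
Lemma Kbasis2 : Kbasis`_(@inord 2 2) = C. Proof. by rewrite inordK. Qed.

(* Freeness: bracketing a relation with C kills its C-part, and then
   bracketing with A kills its B-part. *)
Lemma Kbasis_free : free Kbasis.
Proof.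
apply/freeP => kk; rewrite sum_ord3 Kbasis0 Kbasis1 Kbasis2 => rel.
have brC_ (v : V) : br C v = - br v C by rewrite (brC hL v C).
have relAB : kk (inord 0) *: A + kk (inord 1) *: B = 0.
  have := congr1 (br C) rel.
  rewrite (br0r hL) !(brDr hL) !(brZr hL) (brxx hL) scaler0 addr0 !brC_ tAC tBC.
  by rewrite !scalerN -opprD => /eqP; rewrite oppr_eq0 => /eqP.
have k2 : kk (inord 2) = 0.
  by move: rel; rewrite relAB add0r => /eqP; rewrite scaler_eq0 (negPf Cnz) orbF => /eqP.
have k1 : kk (inord 1) = 0.
  have := congr1 (br A) relAB.
  rewrite (br0r hL) (brDr hL) !(brZr hL) (brxx hL) scaler0 add0r tAB.
  by move=> /eqP; rewrite scaler_eq0 (negPf Cnz) orbF => /eqP.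
have Anz : A != 0 by apply: contraNneq Cnz => A0; rewrite -tAB A0 (br0l hL).
have k0 : kk (inord 0) = 0.
  move: relAB; rewrite k1 scale0r addr0 => /eqP.
  by rewrite scaler_eq0 (negPf Anz) orbF => /eqP.
by move=> i; case: (ord3P i) => ->.
Qed.

Definition Kcoord : 'Hom(V, 'rV[F]_3) := linfun (coordrow Kbasis).

Lemma Kcoord_decomp y : y = coord Kbasis (inord 0) y *: A
  + coord Kbasis (inord 1) y *: B + coord Kbasis (inord 2) y *: C.
Proof. by rewrite {1}(coord_span (spanABC y)) sum_ord3 Kbasis0 Kbasis1 Kbasis2. Qed.

Lemma Kcoord_comb p0 p1 p2 :
  Kcoord (p0 *: A + p1 *: B + p2 *: C) = p0 *: Ka F + p1 *: Kb F + p2 *: Kc F.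
Proof.
rewrite lfunE; apply/rowP => j; rewrite !mxE !linearD !linearZ /=.
rewrite -Kbasis0 -Kbasis1 -Kbasis2 !coord_free ?Kbasis_free //.
by case: (ord3P j) => ->;
  rewrite !inord3_eq //= ?mulr1n ?mulr0n ?mulr1 ?mulr0 ?addr0 ?add0r.
Qed.

Lemma Kcoord_br y z : Kcoord (br y z) = K_br (Kcoord y) (Kcoord z).
Proof.
rewrite {1}(Kcoord_decomp y) {1}(Kcoord_decomp z) br_coords Kcoord_comb.
rewrite /K_br !lfunE !mxE.
by rewrite [RHS]addrC [in RHS](addrC (_ *: Kc F)) addrA.
Qed.

Lemma K_iso : exists f : 'Hom(V, 'rV[F]_3),
  [/\ lker f = 0%VS, limg f = fullv,
      (forall y z : V, f (br y z) = K_br (f y) (f z))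
    & (f @: <[C]>)%VS = <[Kc F]>%VS].
Proof.
exists Kcoord; split; last 2 first.
- exact: Kcoord_br.
- have -> : C = 0 *: A + 0 *: B + 1 *: C by rewrite !scale0r !add0r scale1r.
  by rewrite limg_line Kcoord_comb !scale0r !add0r scale1r.
- apply/eqP/lker0P => u v /rowP Huv.
  have cuv i : coord Kbasis i u = coord Kbasis i v.
    by move: (Huv i); rewrite !lfunE !mxE.
  by rewrite (Kcoord_decomp u) (Kcoord_decomp v) !cuv.
apply/eqP; rewrite eqEsubv subvf /=; apply/subvP => r _.
have -> : r = Kcoord (r 0 (inord 0) *: A + r 0 (inord 1) *: B + r 0 (inord 2) *: C).
  rewrite Kcoord_comb; apply/rowP => j; rewrite !mxE.
  by case: (ord3P j) => ->;
    rewrite !inord3_eq //= ?mulr1n ?mulr0n ?mulr1 ?mulr0 ?addr0 ?add0r.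
exact/memv_img/memvf.
Qed.
End KRecognition.

(* If [x, y] \in <x> + <y> for all y, then ad x induces on L/<x> a map for
   which every vector is an eigenvector; such a map is a scalar. *)
Section ScalarModLine.
Variables (F : fieldType) (V : vectType F) (br : V -> V -> V).
Hypothesis hL : is_lie_bracket br.
Variable x : V.
Hypothesis quasi_x : forall y, br x y \in (<[x]> + <[y]>)%VS.
Add Ring sqz_ring : (@sqz_ring_theory F V).

Definition shift (t : F) (y : V) := br x y - t *: y.

Lemma shiftD t u v : shift t (u + v) = shift t u + shift t v.
Proof. by rewrite /shift (brDr hL) scalerDr opprD addrACA. Qed.
Lemma shiftZ t a u : shift t (a *: u) = a *: shift t u.
Proof. by rewrite /shift (brZr hL) scalerBr !scalerA mulrC. Qed.

Lemma shift_eigen t y : exists u, shift t y - u *: y \in <[x]>%VS.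
Proof.
have [p [s Hs]] := mem_add_lineP (quasi_x y); exists (s - t).
by rewrite /shift Hs scalerBl opprB addrA subrK addrK; apply/memvZ/memv_line.
Qed.

(* If ad x acts as t modulo <x> on one y0 outside <x>, it does so everywhere:
   otherwise comparing the eigenvalues of y, y + y0 and y0 puts y in
   <x> + <y0>, where ad x - t maps into <x>. *)
Lemma scalar_mod_line t y0 : y0 \notin <[x]>%VS -> shift t y0 \in <[x]>%VS ->
  forall y, shift t y \in <[x]>%VS.
Proof.
move=> y0x Sy0 y.
have Sx : shift t x \in <[x]>%VS.
  by rewrite /shift (brxx hL) sub0r memvN memvZ ?memv_line.
have Sspan v : v \in (<[x]> + <[y0]>)%VS -> shift t v \in <[x]>%VS.
  by case/mem_add_lineP => p [q ->]; rewrite shiftD !shiftZ memvD ?memvZ.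
have [u Sy] := shift_eigen t y; have [w Syy0] := shift_eigen t (y + y0).
have Hcomb : (u - w) *: y - w *: y0 \in <[x]>%VS.
  suff -> : (u - w) *: y - w *: y0 =
      shift t (y + y0) - w *: (y + y0) - (shift t y - u *: y) - shift t y0.
    by apply: rpredB => //; apply: rpredB.
  rewrite shiftD; vector_ring F V.
have [u0 | unz] := eqVneq u 0; first by move: Sy; rewrite u0 scale0r subr0.
have [uw | unw] := eqVneq u w.
  move: Hcomb; rewrite -uw subrr scale0r sub0r memvN => Hy0.
  by move: y0x; rewrite -(scalerK unz y0) memvZ.
apply: Sspan; have unw' : u - w != 0 by rewrite subr_eq0.
have -> : y = (u - w)^-1 *: ((u - w) *: y - w *: y0) + ((u - w)^-1 * w) *: y0.
  by rewrite scalerBr scalerA mulVf // scale1r -scalerA subrK.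
by apply: memv_add; [exact: memvZ | exact/memvZ/memv_line].
Qed.

Lemma adx_scalar_mod_line : (exists y, br x y \notin <[x]>%VS) ->
  exists l, l != 0 /\ forall y, br x y - l *: y \in <[x]>%VS.
Proof.
case=> y0 Hy0; have [p [t Ht]] := mem_add_lineP (quasi_x y0).
have tnz : t != 0.
  by apply: contraNneq Hy0 => t0; rewrite Ht t0 scale0r addr0 memvZ ?memv_line.
have y0x : y0 \notin <[x]>%VS.
  by apply: contra Hy0 => /vlineP [a ->]; rewrite (brZr hL) (brxx hL) scaler0 mem0v.
exists t; split => //; apply: (scalar_mod_line y0x).
by rewrite /shift Ht addrK memvZ ?memv_line.
Qed.
End ScalarModLine.

Section Eigenspace.
Variables (F : fieldType) (V : vectType F) (br : V -> V -> V).
Hypothesis hL : is_lie_bracket br.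
Variables (x : V) (l : F).
Hypotheses (xnz : x != 0) (lnz : l != 0).
Hypothesis scalar_x : forall y, br x y - l *: y \in <[x]>%VS.
Add Ring sqz_ring : (@sqz_ring_theory F V).

Definition eigen (v : V) := br x v = l *: v.

Lemma eigen0 : eigen 0.
Proof. by rewrite /eigen (br0r hL) scaler0. Qed.
Lemma eigenD u v : eigen u -> eigen v -> eigen (u + v).
Proof. by rewrite /eigen (brDr hL) scalerDr => -> ->. Qed.
Lemma eigenZ a u : eigen u -> eigen (a *: u).
Proof. by rewrite /eigen (brZr hL) => ->; rewrite !scalerA mulrC. Qed.

(* E meets <x> trivially, since ad x kills x. *)
Lemma eigen_line a : eigen (a *: x) -> a = 0.
Proof.
rewrite /eigen (brZr hL) (brxx hL) scaler0 scalerA => /esym /eqP.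
by rewrite scaler_eq0 mulf_eq0 (negPf lnz) (negPf xnz) /= orbF => /eqP.
Qed.

Lemma eigen_decomp y : exists s e, eigen e /\ y = e + s *: x.
Proof.
have /vlineP [c Hc] := scalar_x y.
exists (- (c / l)), (y + (c / l) *: x); split; last by rewrite scaleNr addrK.
rewrite /eigen (brDr hL) (brZr hL) (brxx hL) scaler0 addr0 scalerDr scalerA.
by rewrite mulrCA divff // mulr1 addrC -Hc subrK.
Qed.

(* By Jacobi, ad x acts as 2 l on [h, k]; as 2 l is not an eigenvalue
   modulo <x> unless the E-part vanishes, [h, k] = mu x with 2 mu = 0. *)
Lemma eigen_br h k : eigen h -> eigen k ->
  exists mu, br h k = mu *: x /\ mu + mu = 0.
Proof.
move=> Eh Ek.
have adx_hk : br x (br h k) = l *: br h k + l *: br h k.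
  have J := jacobi hL x h k.
  rewrite (brC hL x k) Ek (brNr hL) Eh !(brZr hL) (brC hL h k) in J.
  by apply/eqP; rewrite -subr_eq0 -J; apply/eqP; vector_ring F V.
have [s [e [Ee He]]] := eigen_decomp (br h k).
have e_line : e = (- (s + s)) *: x.
  move: adx_hk; rewrite He (brDr hL) (brZr hL) (brxx hL) scaler0 addr0 Ee => H.
  have H0 : l *: e - (l *: (e + s *: x) + l *: (e + s *: x)) = 0.
    by rewrite {1}H subrr.
  apply: (scalerI lnz); apply/eqP; rewrite -subr_eq0; apply/eqP.
  by rewrite -[RHS]oppr0 -H0; vector_ring F V.
have := Ee; rewrite e_line => /eigen_line /eqP; rewrite oppr_eq0 => /eqP s2.
by exists s; rewrite He e_line s2 oppr0 scale0r add0r.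
Qed.

(* The eigenspace lies in L^2: e = [l^-1 x, e]. *)
Lemma eigen_in_square e : eigen e -> e \in lie_brs br fullv fullv.
Proof.
move=> Ee; have -> : e = br (l^-1 *: x) e.
  by rewrite (brZl hL) Ee scalerA mulVf // scale1r.
exact/lie_brs_mem/memvf/memvf.
Qed.

Section AbelianEigenspace.
Hypothesis E_abelian : forall h k, eigen h -> eigen k -> br h k = 0.

Lemma square_eigen v : v \in lie_brs br fullv fullv -> eigen v.
Proof.
apply: lie_brs_ind; [exact: eigen0 | exact: eigenD | exact: eigenZ |] => u w _ _.
have [s1 [e1 [E1 ->]]] := eigen_decomp u; have [s2 [e2 [E2 ->]]] := eigen_decomp w.
rewrite !(brDl hL, brDr hL, brZl hL, brZr hL) (E_abelian E1 E2) (brxx hL).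
rewrite (brC hL x e1) E1 E2 !scaler0 addr0 add0r scalerN -scaleNr !scalerA.
by apply: eigenD; apply: eigenZ.
Qed.

Lemma almost_abelian_of_abelian_eigenspace : almost_abelian br.
Proof.
set L2 := lie_brs br fullv fullv.
have linv : l^-1 != 0 by rewrite invr_eq0.
exists (l^-1 *: x); split.
- by rewrite scaler_eq0 negb_or linv.
- apply/eqP; rewrite eqEsubv subvf /=; apply/subvP => y _.
  have [s [e [Ee ->]]] := eigen_decomp y.
  have -> : s *: x = (s * l) *: (l^-1 *: x) by rewrite scalerA -mulrA mulfV // mulr1.
  by apply: memv_add; [exact: eigen_in_square | exact/memvZ/memv_line].
- apply/directv_addP/eqP; rewrite -subv0; apply/subvP => v /memv_capP [Hv /vlineP [a Ha]].
  have := square_eigen Hv; rewrite Ha scalerA => /eigen_line /eqP.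
  by rewrite mulf_eq0 (negPf linv) orbF => /eqP ->; rewrite mul0r scale0r mem0v.
- apply/eqP; rewrite -subv0; apply/(lie_brs_subP hL) => u w Hu Hw.
  by rewrite (E_abelian (square_eigen Hu) (square_eigen Hw)) mem0v.
- by move=> y /square_eigen Ey; rewrite (brZl hL) Ey scalerA mulVf // scale1r.
Qed.
End AbelianEigenspace.

Section NonAbelianEigenspace.
Variables (h k : V) (mu : F).
Hypotheses (Eh : eigen h) (Ek : eigen k) (Hhk : br h k = mu *: x).
Hypotheses (munz : mu != 0) (mu2 : mu + mu = 0).

Lemma char2_two : (1 + 1 : F) = 0.
Proof.
apply/eqP; have : (1 + 1) * mu == 0 by rewrite mulrDl mul1r mu2.
by rewrite mulf_eq0 (negPf munz) orbF.
Qed.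

Lemma char2_pchar : 2%N \in [pchar F].
Proof. by rewrite inE /= -addn1 natrD char2_two eqxx. Qed.

Lemma char2_oppv (v : V) : - v = v.
Proof.
apply: (addIr v); rewrite addNr -[v in v + v]scale1r -scalerDl.
by rewrite char2_two scale0r.
Qed.

(* Jacobi on e, h, k gives mu e \in <h> + <k>: E = <h> + <k>. *)
Lemma eigen_span e : eigen e -> exists a b, e = a *: h + b *: k.
Proof.
move=> Ee.
have [n1 [Hn1 _]] := eigen_br Ek Ee; have [n2 [Hn2 _]] := eigen_br Ee Eh.
have J := jacobi hL e h k.
rewrite Hhk Hn1 Hn2 !(brZr hL) (brC hL x e) (brC hL x h) (brC hL x k) Ee Eh Ek in J.
have rel : mu *: e + n1 *: h + n2 *: k = 0.
  by apply: (scalerI lnz); rewrite scaler0 -oppr0 -J; vector_ring F V.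
exists (- (n1 / mu)), (- (n2 / mu)); rewrite -(scalerK munz e).
have -> : mu *: e = - (n1 *: h + n2 *: k).
  by apply/eqP; rewrite -subr_eq0 opprK addrA rel.
vector_ring F V.
Qed.

(* E contains no nonzero e whose line is a quasi-ideal: [e, h] or [e, k] is
   a nonzero multiple of x, which is not in <e> + <h> (resp. <e> + <k>). *)
Lemma eigen_not_quasi e : eigen e -> e != 0 ->
  ~ (forall v, br e v \in (<[e]> + <[v]>)%VS).
Proof.
move=> Ee enz quasi_e.
have x_out v c : eigen v -> c != 0 -> br e v = c *: x -> False.
  move=> Ev cnz Hc; have /mem_add_lineP [p [q Hx]] : x \in (<[e]> + <[v]>)%VS.
    by rewrite -(scalerK cnz x) memvZ // -Hc quasi_e.
  by apply: (negP (oner_neq0 F)); apply/eqP/eigen_line;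
    rewrite scale1r Hx; apply: eigenD; apply: eigenZ.
have [a [b Hab]] := eigen_span Ee.
have [b0 | bnz] := eqVneq b 0.
  have anz : a != 0 by apply: contraNneq enz => a0; rewrite Hab a0 b0 !scale0r addr0.
  apply: (x_out k (a * mu) Ek); first by rewrite mulf_neq0.
  by rewrite Hab b0 scale0r addr0 (brZl hL) Hhk scalerA.
apply: (x_out h (- (b * mu)) Eh); first by rewrite oppr_eq0 mulf_neq0.
rewrite Hab (brDl hL) !(brZl hL) (brxx hL) scaler0 add0r (brC hL h k) Hhk.
by rewrite scalerN scalerA scaleNr.
Qed.

(* A strong quasi-ideal containing x is <x>: the E-part of each q \in Q lies
   in Q (as l^-1 [x, q]), hence vanishes by eigen_not_quasi. *)
Lemma strong_quasi_eq_line Q : is_strong_quasi_ideal br Q -> x \in Q -> Q = <[x]>%VS.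
Proof.
move=> HQ xQ; apply/eqP; rewrite eqEsubv -memvE xQ andbT; apply/subvP => q qQ.
have [s [e [Ee He]]] := eigen_decomp q.
have eQ : e \in Q.
  have : br x q \in Q by apply: (subvP HQ.1); apply: (lie_brs_mem hL).
  rewrite He (brDr hL) (brZr hL) (brxx hL) scaler0 addr0 Ee.
  by rewrite -{2}(scalerK lnz e); apply: memvZ.
have [e0 | enz] := eqVneq e 0; first by rewrite He e0 add0r memvZ ?memv_line.
by case: (eigen_not_quasi Ee enz (strong_quasi_line hL HQ eQ enz)).
Qed.

Lemma K_case Q : is_strong_quasi_ideal br Q -> x \in Q ->
  exists f : 'Hom(V, 'rV[F]_3),
    [/\ lker f = 0%VS, limg f = fullv,
        (forall y z : V, f (br y z) = K_br (f y) (f z))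
      & (f @: Q)%VS = <[Kc F]>%VS].
Proof.
move=> HQ xQ; set A := (mu^-1 * l^-1) *: h; set C := l^-1 *: x.
have linv : l^-1 != 0 by rewrite invr_eq0.
have adC e : eigen e -> br e C = e.
  move=> Ee; rewrite (brC hL) (brZl hL) Ee scalerA mulVf // scale1r.
  exact: char2_oppv.
have tAB : br A k = C by rewrite (brZl hL) Hhk scalerA mulrAC mulVf // mul1r.
have Cnz : C != 0 by rewrite scaler_eq0 negb_or linv.
have spanABC y : y \in <<[:: A; k; C]>>%VS.
  have mA : A \in <<[:: A; k; C]>>%VS by apply: memv_span; rewrite inE eqxx.
  have mk : k \in <<[:: A; k; C]>>%VS by apply: memv_span; rewrite !inE eqxx orbT.
  have mC : C \in <<[:: A; k; C]>>%VS by apply: memv_span; rewrite !inE eqxx !orbT.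
  have mh : h \in <<[:: A; k; C]>>%VS.
    suff -> : h = (l * mu) *: A by apply: memvZ.
    by rewrite scalerA -mulrA (mulrA mu) divff // mul1r divff // scale1r.
  have mx : x \in <<[:: A; k; C]>>%VS.
    by rewrite -[x](scalerKV lnz) memvZ.
  have [s [e [Ee ->]]] := eigen_decomp y; have [a [b ->]] := eigen_span Ee.
  by apply: memvD; [apply: memvD |]; apply: memvZ.
have [f [f_ker f_img f_br f_C]] :=
  K_iso hL tAB (adC _ (eigenZ _ Eh)) (adC _ Ek) Cnz spanABC.
exists f; split => //; rewrite (strong_quasi_eq_line HQ xQ) -f_C.
congr (f @: _)%VS; apply/eqP; rewrite eqEsubv -!memvE /C memvZ ?memv_line //=.
by rewrite -[x in x \in _](scalerK linv) memvZ ?memv_line.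
Qed.
End NonAbelianEigenspace.
End Eigenspace.

Theorem lemma3p1 (F : fieldType) (V : vectType F) (br : V -> V -> V)
  (hL : is_lie_bracket br) (Q : {vspace V}) :
  is_strong_quasi_ideal br Q ->
  [\/ is_strong_ideal br Q,
      almost_abelian br
    | 2%N \in [pchar F] /\
      exists f : 'Hom(V, 'rV[F]_3),
        [/\ lker f = 0%VS, limg f = fullv,
            (forall x y : V, f (br x y) = K_br (f x) (f y))
          & (f @: Q)%VS = <[Kc F]>%VS]].
Proof.
move=> HQ; have [SI | nSI] := classic (is_strong_ideal br Q); first exact: Or31.
have [x [xQ xnz not_ideal]] := not_strong_ideal_witness hL HQ.1 nSI.
have quasi_x := strong_quasi_line hL HQ xQ xnz.
have [l [lnz scalar_x]] := adx_scalar_mod_line hL quasi_x not_ideal.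
have [E_ab | E_nonab] :=
  classic (forall h k, eigen br x l h -> eigen br x l k -> br h k = 0).
  apply: Or32.
  exact: (almost_abelian_of_abelian_eigenspace hL xnz lnz scalar_x E_ab).
have [h [k [Eh Ek hk_nz]]] : exists h k,
    [/\ eigen br x l h, eigen br x l k & br h k != 0].
  apply: NNPP => none; apply: E_nonab => h k Eh Ek; apply: NNPP => hk_nz.
  by apply: none; exists h, k; split => //; apply/eqP.
have [mu [Hhk mu2]] := eigen_br hL xnz lnz scalar_x Eh Ek.
have munz : mu != 0 by apply: contraNneq hk_nz => mu0; rewrite Hhk mu0 scale0r.
apply: Or33; split; first exact: (char2_pchar munz mu2).
exact: (K_case hL xnz lnz scalar_x Eh Ek Hhk munz mu2 HQ xQ).
Qed.
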